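(* Let $\Gamma$ be either $\Gamma_1$ or $\Gamma_2$ (as in the context), with the Laplacian $-d^2/dx^2$ (no potential). Let $\Gamma^A$ (resp. $\Gamma^B$) be the quantum graph obtained from $\Gamma$ by replacing the vertex condition at $A$ (resp. at $B$) by the Dirichlet condition, all other conditions unchanged. Then $\lambda_1(\Gamma^B)<\lambda_1(\Gamma^A)$.
   Context: $\Gamma_1$: two vertices $A,B$ joined by four edges $e_1,\dots,e_4$ of lengths $\ell_1,\dots,\ell_4>0$, with $\delta$-type conditions at $A$ and $B$ with real coupling constants $\gamma_A<\gamma_B$. $\Gamma_2$: $\Gamma_1$ with an additional vertex $C$ and edge $e_0$ of length $\ell_0>0$ joining $C$ to $A$, with Neumann–Kirchhoff conditions at all of $A,B,C$. A $\delta$-type condition with coupling $\gamma_v$ at $v$: $f$ continuous at $v$ and $\sum_{e\ni v}f_e'(v)=\gamma_v f(v)$ (derivatives into the edges); Neumann–Kirchhoff is $\gamma_v=0$; the Dirichlet condition at $v$ is $f_e(v)=0$ for all edges $e$ at $v$ (it decouples the edges at $v$). $\lambda_1(G)$ denotes the smallest eigenvalue of the quantum graph $G$. *)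

From Stdlib Require Import Reals List.
From Coquelicot Require Import Coquelicot.
Open Scope R_scope.

(* Vertex conditions: delta-type with coupling constant g (g = 0 is
   Neumann-Kirchhoff), or Dirichlet (f_e(v) = 0 on every edge at v). *)
Inductive vcond := VDelta (g : R) | VDir.

(* [vals] = the values f_e(v) of the edge pieces at v,
   [dsum] = sum of the derivatives at v taken into the edges. *)
Definition vertex_cond (c : vcond) (vals : list R) (dsum : R) : Prop :=
  match c with
  | VDelta g => exists v, List.Forall (fun w => w = v) vals /\ dsum = g * v
  | VDir => List.Forall (fun w => w = 0) vals
  end.

Definition edge_eq (l lam : R) (f df ddf : R -> R) : Prop :=
  (forall x, is_derive f x (df x)) /\ (forall x, is_derive df x (ddf x)) /\
  (forall x, 0 <= x <= l -> - ddf x = lam * f x).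

(* Gamma_1: edges e_1..e_4 (indices 1..4), parametrized by x in [0, l_i],
   x = 0 at A and x = l_i at B.  [eig1 cA cB l1 l2 l3 l4 lam]:
   lam is an eigenvalue of -d^2/dx^2 on Gamma_1 with conditions cA at A and
   cB at B. *)
Definition eig1 (cA cB : vcond) (l1 l2 l3 l4 : R) (lam : R) : Prop :=
  let l := fun i : nat => match i with 1 => l1 | 2 => l2 | 3 => l3 | _ => l4 end in
  exists f df ddf : nat -> R -> R,
    (forall i, (1 <= i <= 4)%nat -> edge_eq (l i) lam (f i) (df i) (ddf i)) /\
    vertex_cond cA (f 1%nat 0 :: f 2%nat 0 :: f 3%nat 0 :: f 4%nat 0 :: nil)
      (df 1%nat 0 + df 2%nat 0 + df 3%nat 0 + df 4%nat 0) /\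
    vertex_cond cB (f 1%nat l1 :: f 2%nat l2 :: f 3%nat l3 :: f 4%nat l4 :: nil)
      (- df 1%nat l1 - df 2%nat l2 - df 3%nat l3 - df 4%nat l4) /\
    (exists i x, (1 <= i <= 4)%nat /\ 0 <= x <= l i /\ f i x <> 0).

(* Gamma_2: Gamma_1 plus edge e_0 (index 0) parametrized by x in [0, l0],
   x = 0 at C and x = l0 at A; Neumann-Kirchhoff at C. *)
Definition eig2 (cA cB : vcond) (l0 l1 l2 l3 l4 : R) (lam : R) : Prop :=
  let l := fun i : nat => match i with 0 => l0 | 1 => l1 | 2 => l2 | 3 => l3 | _ => l4 end in
  exists f df ddf : nat -> R -> R,
    (forall i, (i <= 4)%nat -> edge_eq (l i) lam (f i) (df i) (ddf i)) /\
    vertex_cond cA (f 0%nat l0 :: f 1%nat 0 :: f 2%nat 0 :: f 3%nat 0 :: f 4%nat 0 :: nil)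
      (- df 0%nat l0 + df 1%nat 0 + df 2%nat 0 + df 3%nat 0 + df 4%nat 0) /\
    vertex_cond cB (f 1%nat l1 :: f 2%nat l2 :: f 3%nat l3 :: f 4%nat l4 :: nil)
      (- df 1%nat l1 - df 2%nat l2 - df 3%nat l3 - df 4%nat l4) /\
    vertex_cond (VDelta 0) (f 0%nat 0 :: nil) (df 0%nat 0) /\
    (exists i x, (i <= 4)%nat /\ 0 <= x <= l i /\ f i x <> 0).

Definition is_lambda1 (E : R -> Prop) (lam : R) : Prop :=
  E lam /\ forall mu, E mu -> lam <= mu.

Definition lambda1_lt (EB EA : R -> Prop) : Prop :=
  (exists a, is_lambda1 EA a) /\ (exists b, is_lambda1 EB b) /\
  (forall a b, is_lambda1 EA a -> is_lambda1 EB b -> b < a).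

From Stdlib Require Import Reals Lra Lia List.
From Stdlib Require RList.
From Coquelicot Require Import Coquelicot.
Import ListNotations.
Open Scope R_scope.

(* For lam below the first Dirichlet eigenvalue of every edge,
   eliminating the edges reduces the eigenvalue problem of Gamma^A and Gamma^B to a scalar
   secular equation at the remaining delta vertex: sum_i k cot (k l_i) = - gamma for Gamma_1,
   with lam = k^2 (and sum_i k cot (k l_i) = k tan (k l_0) for Gamma_2^B).  A Wronskian
   argument shows that the left-hand side decreases strictly in lam, from +oo to -oo at the
   first pole, so the secular equation has exactly one root below the poles; it is lambda_1,
   since every eigenvalue that is not below the poles lies above it.
   For Gamma_1, reversing all edges shows that Gamma^A has the secular equation of Gamma^B
   with gamma_B in place of gamma_A, and gamma_A < gamma_B gives the inequality.  For
   Gamma_2, the Dirichlet condition at A decouples e_0, so lambda_1(Gamma^A) is the smaller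
   of (PI / (2 l_0))^2 and the root of sum_i k cot (k l_i) = 0; the root for Gamma^B lies
   below both because k tan (k l_0) > 0 there. *)

Lemma mul_sq_lt_of_le lam mu y l c : 0 < c -> lam <= mu -> 0 <= y <= l ->
  mu * l ^ 2 < c -> lam * y ^ 2 < c.
Proof.
  intros Hc Hle Hy Hmu. assert (y ^ 2 <= l ^ 2) by nra.
  destruct (Rle_dec lam 0); nra.
Qed.

Lemma one_sub_cos_le y : 0 <= y <= 1 -> 0 <= 1 - cos y <= y ^ 2 / 2.
Proof.
  intros Hy. pose proof PI2_3_2.
  replace (cos y) with (cos (2 * (y / 2))) by (f_equal; field). rewrite cos_2a_sin.
  assert (0 <= sin (y / 2)) by (apply sin_ge_0; lra).
  assert (sin (y / 2) <= y / 2).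
  { destruct (Req_dec y 0) as [->|]; [unfold Rdiv; rewrite Rmult_0_l, sin_0; lra|].
    apply Rlt_le, sin_lt_x. lra. }
  split; nra.
Qed.

Lemma cot_ge_inv d : 0 < d <= 1 / 2 -> / (2 * d) <= cos d / sin d.
Proof.
  intros Hd. pose proof (one_sub_cos_le d ltac:(lra)). pose proof PI2_3_2.
  assert (0 < sin d) by (apply sin_gt_0; lra). pose proof (sin_lt_x d ltac:(lra)).
  apply Rmult_le_reg_r with (2 * d * sin d); [nra|].
  field_simplify; nra.
Qed.

Lemma cosh_sub_1_le y : 0 <= y <= 1 / 2 -> 0 <= (exp y + exp (- y)) / 2 - 1 <= 2 * y ^ 2.
Proof.
  intros Hy.
  assert (E : exp y * exp (- y) = 1) by (rewrite <- exp_plus, Rplus_opp_r; apply exp_0).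
  pose proof (exp_ineq1_le y). pose proof (exp_ineq1_le (- y)).
  pose proof (exp_pos y). pose proof (exp_pos (- y)).
  set (a := exp y) in *. set (b := exp (- y)) in *.
  assert (a * (1 - y) <= 1) by nra.
  assert (a <= 1 + 2 * y) by nra.
  split; nra.
Qed.

Lemma MVT_is_derive F dF a b : a < b -> (forall x, a <= x <= b -> is_derive F x (dF x)) ->
  exists c, F b - F a = dF c * (b - a) /\ a < c < b.
Proof. intros Hab HF. apply MVT_cor2; auto. intros c Hc. apply is_derive_Reals, HF, Hc. Qed.

Lemma lt_of_is_derive_neg F dF a b : a < b -> (forall x, a <= x <= b -> is_derive F x (dF x)) ->
  (forall x, a < x < b -> dF x < 0) -> F b < F a.
Proof.
  intros Hab HF Hneg. destruct (MVT_is_derive F dF a b Hab HF) as [c [Ec Hc]].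
  specialize (Hneg c Hc). nra.
Qed.

Lemma const_of_is_derive_0 F a b x : (forall y, a <= y <= b -> is_derive F y 0) ->
  a <= x <= b -> F x = F a.
Proof.
  intros HF Hx. destruct (Req_dec x a) as [->|Hxa]; auto.
  destruct (MVT_is_derive F (fun _ => 0) a x) as [c [Ec _]]; [lra| |lra].
  intros y Hy. apply HF. lra.
Qed.

Lemma Rabs_sub_le_of_is_derive F dF a b M : a <= b ->
  (forall x, a <= x <= b -> is_derive F x (dF x)) -> (forall x, a <= x <= b -> Rabs (dF x) <= M) ->
  Rabs (F b - F a) <= M * (b - a).
Proof.
  intros Hab HF HM. destruct (Req_dec a b) as [<-|Hne].
  - rewrite !Rminus_diag, Rabs_R0. lra.
  - destruct (MVT_is_derive F dF a b) as [c [Ec Hc]]; [lra|auto|].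
    rewrite Ec, Rabs_mult, (Rabs_right (b - a)) by lra.
    apply Rmult_le_compat_r; [lra|]. apply HM. lra.
Qed.

Lemma is_derive_reflect (f : R -> R) d l x :
  is_derive f (l - x) d -> is_derive (fun t => f (l - t)) x (- d).
Proof.
  intros H. replace (- d) with (scal (-1) d) by (unfold scal; simpl; unfold mult; simpl; ring).
  apply (is_derive_comp f (fun t => l - t)); auto. auto_derive; auto.
Qed.

Lemma continuity_pt_of_ex_derive (f : R -> R) x : ex_derive f x -> continuity_pt f x.
Proof. intros H. apply continuity_pt_filterlim, (ex_derive_continuous f x), H. Qed.

Lemma continuity_pt_of_lipschitz_at g a d K : 0 < d ->
  (forall y, Rabs (y - a) < d -> Rabs (g y - g a) <= K * Rabs (y - a)) -> continuity_pt g a.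
Proof.
  intros Hd Hg eps Heps. pose proof (Rabs_pos K).
  exists (Rmin d (eps / (Rabs K + 1))). split.
  { apply Rmin_pos; auto. apply Rdiv_lt_0_compat; lra. }
  intros y [_ Hy]. simpl in *. unfold R_dist in *.
  assert (Hyd : Rabs (y - a) < d) by (eapply Rlt_le_trans; [exact Hy | apply Rmin_l]).
  assert (Hye : Rabs (y - a) < eps / (Rabs K + 1))
    by (eapply Rlt_le_trans; [exact Hy | apply Rmin_r]).
  pose proof (Rabs_pos (y - a)). pose proof (RRle_abs K).
  apply Rle_lt_trans with (K * Rabs (y - a)); [auto|].
  apply Rle_lt_trans with ((Rabs K + 1) * Rabs (y - a)); [nra|].
  apply Rmult_lt_reg_r with (/ (Rabs K + 1)); [apply Rinv_0_lt_compat; lra|].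
  replace ((Rabs K + 1) * Rabs (y - a) * / (Rabs K + 1)) with (Rabs (y - a)) by (field; lra).
  exact Hye.
Qed.

(** * Fundamental solutions of -u'' = lam u *)

(* cosl and sinl solve -u'' = lam u with (u, u')(0) = (1, 0) and (0, 1). *)
Definition cosl (lam x : R) : R :=
  if Rlt_dec 0 lam then cos (sqrt lam * x)
  else if Rlt_dec lam 0 then (exp (sqrt (- lam) * x) + exp (- (sqrt (- lam) * x))) / 2
  else 1.

Definition sinl (lam x : R) : R :=
  if Rlt_dec 0 lam then sin (sqrt lam * x) / sqrt lam
  else if Rlt_dec lam 0 then
    (exp (sqrt (- lam) * x) - exp (- (sqrt (- lam) * x))) / (2 * sqrt (- lam))
  else x.

Lemma cosl_sinl_cases lam :
  (exists k, 0 < k /\ lam = k ^ 2 /\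
     forall x, cosl lam x = cos (k * x) /\ sinl lam x = sin (k * x) / k) \/
  (exists k, 0 < k /\ lam = - k ^ 2 /\
     forall x, cosl lam x = (exp (k * x) + exp (- (k * x))) / 2 /\
               sinl lam x = (exp (k * x) - exp (- (k * x))) / (2 * k)) \/
  (lam = 0 /\ forall x, cosl lam x = 1 /\ sinl lam x = x).
Proof.
  unfold cosl, sinl. destruct (Rlt_dec 0 lam) as [Hpos|Hpos].
  - left. exists (sqrt lam). repeat split; auto using sqrt_lt_R0.
    rewrite <- Rsqr_pow2. symmetry. apply Rsqr_sqrt. lra.
  - destruct (Rlt_dec lam 0) as [Hneg|Hneg].
    + right; left. exists (sqrt (- lam)). repeat split; auto.
      * apply sqrt_lt_R0. lra.
      * rewrite <- Rsqr_pow2, Rsqr_sqrt; lra.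
    + right; right. split; auto. lra.
Qed.

Lemma is_derive_sinl lam x : is_derive (sinl lam) x (cosl lam x).
Proof.
  destruct (cosl_sinl_cases lam) as [[k [Hk [_ E]]]|[[k [Hk [_ E]]]|[_ E]]];
    rewrite (proj1 (E x)); eapply is_derive_ext; try (intro t; symmetry; apply (proj2 (E t)));
    auto_derive; try lra; field; lra.
Qed.

Lemma is_derive_cosl lam x : is_derive (cosl lam) x (- lam * sinl lam x).
Proof.
  destruct (cosl_sinl_cases lam) as [[k [Hk [-> E]]]|[[k [Hk [-> E]]]|[-> E]]];
    rewrite (proj2 (E x)); eapply is_derive_ext; try (intro t; symmetry; apply (proj1 (E t)));
    auto_derive; try lra; field; lra.
Qed.

Lemma Derive_sinl lam x : Derive (sinl lam) x = cosl lam x.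
Proof. apply is_derive_unique, is_derive_sinl. Qed.

Lemma Derive_cosl lam x : Derive (cosl lam) x = - lam * sinl lam x.
Proof. apply is_derive_unique, is_derive_cosl. Qed.

Lemma ex_derive_sinl lam x : ex_derive (sinl lam) x.
Proof. eexists; apply is_derive_sinl. Qed.

Lemma ex_derive_cosl lam x : ex_derive (cosl lam) x.
Proof. eexists; apply is_derive_cosl. Qed.

Lemma cosl_0 lam : cosl lam 0 = 1.
Proof.
  destruct (cosl_sinl_cases lam) as [[k [_ [_ E]]]|[[k [_ [_ E]]]|[_ E]]]; rewrite (proj1 (E 0));
    rewrite ?Rmult_0_r, ?Ropp_0, ?cos_0, ?exp_0; lra.
Qed.

Lemma sinl_0 lam : sinl lam 0 = 0.
Proof.
  destruct (cosl_sinl_cases lam) as [[k [Hk [_ E]]]|[[k [Hk [_ E]]]|[_ E]]]; rewrite (proj2 (E 0));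
    rewrite ?Rmult_0_r, ?Ropp_0, ?sin_0, ?exp_0; field; lra.
Qed.

Lemma cosl_lam0 x : cosl 0 x = 1.
Proof. unfold cosl. destruct (Rlt_dec 0 0), (Rlt_dec 0 0); lra. Qed.

Lemma sinl_lam0 x : sinl 0 x = x.
Proof. unfold sinl. destruct (Rlt_dec 0 0), (Rlt_dec 0 0); lra. Qed.

Lemma cosl_sq_add_sinl_sq lam x : cosl lam x ^ 2 + lam * sinl lam x ^ 2 = 1.
Proof.
  destruct (cosl_sinl_cases lam) as [[k [Hk [-> E]]]|[[k [Hk [-> E]]]|[-> E]]];
    rewrite (proj1 (E x)), (proj2 (E x)).
  - rewrite <- (sin2_cos2 (k * x)). unfold Rsqr. field. lra.
  - assert (exp (k * x) * exp (- (k * x)) = 1) by (rewrite <- exp_plus, Rplus_opp_r; apply exp_0).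
    set (a := exp (k * x)) in *; set (b := exp (- (k * x))) in *.
    replace (- k ^ 2) with (- (k * k)) by ring.
    transitivity (a * b); [field; lra | assumption].
  - ring.
Qed.

Lemma sinl_pos lam x : 0 < x -> lam * x ^ 2 < PI ^ 2 -> 0 < sinl lam x.
Proof.
  intros Hx Hlam. pose proof PI_RGT_0.
  destruct (cosl_sinl_cases lam) as [[k [Hk [-> E]]]|[[k [Hk [-> E]]]|[-> E]]];
    rewrite (proj2 (E x)).
  - apply Rdiv_lt_0_compat; auto. apply sin_gt_0; nra.
  - assert (exp (- (k * x)) < exp (k * x)) by (apply exp_increasing; nra).
    apply Rdiv_lt_0_compat; lra.
  - exact Hx.
Qed.

Lemma cosl_pos lam x : 0 <= x -> lam * x ^ 2 < (PI / 2) ^ 2 -> 0 < cosl lam x.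
Proof.
  intros Hx Hlam. pose proof PI_RGT_0.
  destruct (cosl_sinl_cases lam) as [[k [Hk [-> E]]]|[[k [Hk [-> E]]]|[-> E]]];
    rewrite (proj1 (E x)).
  - apply cos_gt_0; nra.
  - pose proof (exp_pos (k * x)). pose proof (exp_pos (- (k * x))). lra.
  - lra.
Qed.

Lemma edge_eq_repr l lam f df ddf x : edge_eq l lam f df ddf -> 0 <= x <= l ->
  f x = f 0 * cosl lam x + df 0 * sinl lam x /\
  df x = - lam * f 0 * sinl lam x + df 0 * cosl lam x.
Proof.
  intros [Hf [Hdf Hode]] Hx.
  assert (Df := fun y => is_derive_unique _ _ _ (Hf y)).
  assert (Ddf := fun y => is_derive_unique _ _ _ (Hdf y)).
  assert (P : f x * cosl lam x - df x * sinl lam x = f 0 * cosl lam 0 - df 0 * sinl lam 0).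
  { apply (const_of_is_derive_0 (fun y => f y * cosl lam y - df y * sinl lam y) 0 l); auto.
    intros y Hy.
    auto_derive; [repeat split; auto using ex_derive_cosl, ex_derive_sinl; eexists; eauto|].
    rewrite Derive_cosl, Derive_sinl, Df, Ddf, <- (Ropp_involutive (ddf y)), Hode by exact Hy.
    ring. }
  assert (Q : lam * f x * sinl lam x + df x * cosl lam x =
              lam * f 0 * sinl lam 0 + df 0 * cosl lam 0).
  { apply (const_of_is_derive_0 (fun y => lam * f y * sinl lam y + df y * cosl lam y) 0 l); auto.
    intros y Hy.
    auto_derive; [repeat split; auto using ex_derive_cosl, ex_derive_sinl; eexists; eauto|].
    rewrite Derive_cosl, Derive_sinl, Df, Ddf, <- (Ropp_involutive (ddf y)), Hode by exact Hy.
    ring. }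
  rewrite cosl_0, sinl_0 in P, Q.
  assert (F0 : f 0 = f x * cosl lam x - df x * sinl lam x) by lra.
  assert (D0 : df 0 = lam * f x * sinl lam x + df x * cosl lam x) by lra.
  pose proof (cosl_sq_add_sinl_sq lam x) as W.
  rewrite F0, D0. split.
  - transitivity (f x * (cosl lam x ^ 2 + lam * sinl lam x ^ 2)); [rewrite W|]; ring.
  - transitivity (df x * (cosl lam x ^ 2 + lam * sinl lam x ^ 2)); [rewrite W|]; ring.
Qed.

Lemma edge_eq_reflect l lam f df ddf : edge_eq l lam f df ddf ->
  edge_eq l lam (fun x => f (l - x)) (fun x => - df (l - x)) (fun x => ddf (l - x)).
Proof.
  intros [Hf [Hdf Hode]]. split; [|split]; intros x.
  - apply is_derive_reflect, Hf.
  - replace (ddf (l - x)) with (- - ddf (l - x)) by ring.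
    apply (is_derive_opp (fun t => df (l - t))), is_derive_reflect, Hdf.
  - intros Hx. apply Hode. lra.
Qed.

Lemma edge_eq_sinl l lam c :
  edge_eq l lam (fun x => c * sinl lam x) (fun x => c * cosl lam x)
    (fun x => - lam * (c * sinl lam x)).
Proof.
  split; [|split]; intros x.
  - apply is_derive_scal, is_derive_sinl.
  - replace (- lam * (c * sinl lam x)) with (c * (- lam * sinl lam x)) by ring.
    apply is_derive_scal, is_derive_cosl.
  - intros _. ring.
Qed.

Lemma edge_eq_cosl l lam c :
  edge_eq l lam (fun x => c * cosl lam x) (fun x => - lam * (c * sinl lam x))
    (fun x => - lam * (c * cosl lam x)).
Proof.
  split; [|split]; intros x.
  - replace (- lam * (c * sinl lam x)) with (c * (- lam * sinl lam x)) by ring.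
    apply is_derive_scal, is_derive_cosl.
  - apply is_derive_scal, is_derive_scal, is_derive_sinl.
  - intros _. ring.
Qed.

(* For lam = k^2 > 0 these are k cot (k l) and k tan (k l): the value of -u'(0)/u(0) on an
   edge [0, l] with u(l) = 0, and of -u'(l)/u(l) on an edge with u'(0) = 0. *)
Definition kcot (lam l : R) : R := cosl lam l / sinl lam l.

Definition ktan (lam l : R) : R := lam * sinl lam l / cosl lam l.

Lemma edge_dirichlet_at_0 l lam f df ddf : 0 < l -> lam * l ^ 2 < PI ^ 2 ->
  edge_eq l lam f df ddf -> f 0 = 0 ->
  df l = f l * kcot lam l /\ (f l = 0 -> forall x, 0 <= x <= l -> f x = 0).
Proof.
  intros Hl Hlam He H0. pose proof (sinl_pos lam l Hl Hlam) as S.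
  destruct (edge_eq_repr l lam f df ddf l He) as [Fl Dl]; [lra|].
  rewrite H0, Rmult_0_l, Rplus_0_l in Fl. rewrite H0, Rmult_0_r, Rmult_0_l, Rplus_0_l in Dl.
  split.
  - rewrite Fl, Dl. unfold kcot. field. lra.
  - intros Hfl x Hx. destruct (edge_eq_repr l lam f df ddf x He Hx) as [Fx _].
    assert (Hd0 : df 0 = 0) by (apply (Rmult_eq_reg_r (sinl lam l)); lra).
    rewrite Fx, H0, Hd0. ring.
Qed.

Lemma edge_dirichlet_at_end l lam f df ddf : 0 < l -> lam * l ^ 2 < PI ^ 2 ->
  edge_eq l lam f df ddf -> f l = 0 ->
  df 0 = - f 0 * kcot lam l /\ (f 0 = 0 -> forall x, 0 <= x <= l -> f x = 0).
Proof.
  intros Hl Hlam He Hfl.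
  assert (Hg0 : f (l - 0) = 0) by (rewrite Rminus_0_r; exact Hfl).
  destruct (edge_dirichlet_at_0 l lam _ _ _ Hl Hlam (edge_eq_reflect l lam f df ddf He) Hg0)
    as [Dl Z].
  rewrite Rminus_diag in Dl. split; [lra|].
  intros H0 x Hx. replace x with (l - (l - x)) by ring.
  apply Z; [rewrite Rminus_diag; exact H0 | lra].
Qed.

Lemma edge_neumann_at_0 l lam f df ddf : 0 < l -> lam * l ^ 2 < (PI / 2) ^ 2 ->
  edge_eq l lam f df ddf -> df 0 = 0 ->
  df l = - f l * ktan lam l /\ (f l = 0 -> forall x, 0 <= x <= l -> f x = 0).
Proof.
  intros Hl Hlam He H0. pose proof (cosl_pos lam l (Rlt_le _ _ Hl) Hlam) as C.
  destruct (edge_eq_repr l lam f df ddf l He) as [Fl Dl]; [lra|].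
  rewrite H0, Rmult_0_l, Rplus_0_r in Fl, Dl.
  split.
  - rewrite Fl, Dl. unfold ktan. field. lra.
  - intros Hfl x Hx. destruct (edge_eq_repr l lam f df ddf x He Hx) as [Fx _].
    assert (Hf0 : f 0 = 0) by (apply (Rmult_eq_reg_r (cosl lam l)); lra).
    rewrite Fx, Hf0, H0. ring.
Qed.

(** * Dependence on lam *)

(* Sturm comparison: the Wronskian of sinl lam and sinl mu vanishes at 0 and has derivative
   (lam - mu) sinl lam sinl mu. *)
Lemma kcot_decreasing lam mu l : 0 < l -> lam < mu -> mu * l ^ 2 < PI ^ 2 ->
  kcot mu l < kcot lam l.
Proof.
  intros Hl Hlt Hmu. pose proof PI_RGT_0.
  assert (Spos : forall nu y, nu <= mu -> 0 < y <= l -> 0 < sinl nu y).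
  { intros nu y Hnu Hy. apply sinl_pos; [lra|]. apply (mul_sq_lt_of_le nu mu y l); nra. }
  assert (W : sinl lam l * cosl mu l - cosl lam l * sinl mu l <
              sinl lam 0 * cosl mu 0 - cosl lam 0 * sinl mu 0).
  { apply (lt_of_is_derive_neg (fun y => sinl lam y * cosl mu y - cosl lam y * sinl mu y)
      (fun y => (lam - mu) * sinl lam y * sinl mu y)); auto.
    - intros y _. auto_derive; [repeat split; auto using ex_derive_sinl, ex_derive_cosl|].
      rewrite !Derive_sinl, !Derive_cosl. ring.
    - intros y Hy. pose proof (Spos lam y (Rlt_le _ _ Hlt) ltac:(lra)).
      pose proof (Spos mu y (Rle_refl _) ltac:(lra)).
      assert (0 < sinl lam y * sinl mu y) by (apply Rmult_lt_0_compat; auto). nra. }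
  rewrite !sinl_0 in W. pose proof (Spos lam l (Rlt_le _ _ Hlt) ltac:(lra)).
  pose proof (Spos mu l (Rle_refl _) ltac:(lra)).
  unfold kcot. apply Rminus_lt.
  replace (cosl mu l / sinl mu l - cosl lam l / sinl lam l) with
    ((sinl lam l * cosl mu l - cosl lam l * sinl mu l) / (sinl lam l * sinl mu l)) by (field; lra).
  apply Rdiv_neg_pos; [lra | apply Rmult_lt_0_compat; auto].
Qed.

Lemma ktan_increasing lam mu l : 0 < l -> lam < mu -> mu * l ^ 2 < (PI / 2) ^ 2 ->
  ktan lam l < ktan mu l.
Proof.
  intros Hl Hlt Hmu. pose proof PI_RGT_0.
  assert (Cpos : forall nu y, nu <= mu -> 0 <= y <= l -> 0 < cosl nu y).
  { intros nu y Hnu Hy. apply cosl_pos; [lra|]. apply (mul_sq_lt_of_le nu mu y l); nra. }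
  assert (W : lam * sinl lam l * cosl mu l - mu * sinl mu l * cosl lam l <
              lam * sinl lam 0 * cosl mu 0 - mu * sinl mu 0 * cosl lam 0).
  { apply (lt_of_is_derive_neg (fun y => lam * sinl lam y * cosl mu y - mu * sinl mu y * cosl lam y)
      (fun y => (lam - mu) * cosl lam y * cosl mu y)); auto.
    - intros y _. auto_derive; [repeat split; auto using ex_derive_sinl, ex_derive_cosl|].
      rewrite !Derive_sinl, !Derive_cosl. ring.
    - intros y Hy. pose proof (Cpos lam y (Rlt_le _ _ Hlt) ltac:(lra)).
      pose proof (Cpos mu y (Rle_refl _) ltac:(lra)).
      assert (0 < cosl lam y * cosl mu y) by (apply Rmult_lt_0_compat; auto). nra. }
  rewrite !sinl_0 in W. pose proof (Cpos lam l (Rlt_le _ _ Hlt) ltac:(lra)).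
  pose proof (Cpos mu l (Rle_refl _) ltac:(lra)).
  unfold ktan. apply Rminus_gt.
  replace (mu * sinl mu l / cosl mu l - lam * sinl lam l / cosl lam l) with
    ((mu * sinl mu l * cosl lam l - lam * sinl lam l * cosl mu l) / (cosl lam l * cosl mu l))
    by (field; lra).
  apply Rdiv_lt_0_compat; [lra | apply Rmult_lt_0_compat; auto].
Qed.

Lemma kcot_le_inv lam l : 0 < l -> 0 <= lam -> lam * l ^ 2 < PI ^ 2 -> kcot lam l <= / l.
Proof.
  intros Hl Hlam Hpole.
  replace (/ l) with (kcot 0 l) by (unfold kcot; rewrite cosl_lam0, sinl_lam0; field; lra).
  destruct (Req_dec lam 0) as [->|Hne]; [lra|].
  apply Rlt_le, kcot_decreasing; auto. lra.
Qed.

Lemma ktan_nonpos lam l : 0 < l -> lam <= 0 -> ktan lam l <= 0.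
Proof.
  intros Hl Hlam. pose proof PI_RGT_0.
  pose proof (sinl_pos lam l Hl ltac:(nra)). pose proof (cosl_pos lam l ltac:(lra) ltac:(nra)).
  assert (0 < / cosl lam l) by (apply Rinv_0_lt_compat; auto).
  assert (lam * sinl lam l <= 0) by nra.
  unfold ktan, Rdiv. nra.
Qed.

Lemma ktan_pos lam l : 0 < l -> 0 < lam -> lam * l ^ 2 < (PI / 2) ^ 2 -> 0 < ktan lam l.
Proof.
  intros Hl Hlam Hpole. pose proof PI_RGT_0.
  pose proof (sinl_pos lam l Hl ltac:(nra)). pose proof (cosl_pos lam l ltac:(lra) Hpole).
  unfold ktan. apply Rdiv_lt_0_compat; auto. apply Rmult_lt_0_compat; auto.
Qed.

Lemma cosl_sq k x : 0 < k -> cosl (k ^ 2) x = cos (k * x).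
Proof.
  intros Hk. unfold cosl. destruct (Rlt_dec 0 (k ^ 2)); [|nra]. rewrite sqrt_pow2; lra.
Qed.

Lemma sinl_sq k x : 0 < k -> sinl (k ^ 2) x = sin (k * x) / k.
Proof.
  intros Hk. unfold sinl. destruct (Rlt_dec 0 (k ^ 2)); [|nra]. rewrite sqrt_pow2; lra.
Qed.

Lemma kcot_opp_sq_ge k l : 0 < k -> 0 < l -> k <= kcot (- k ^ 2) l.
Proof.
  intros Hk Hl. unfold kcot, cosl, sinl.
  destruct (Rlt_dec 0 (- k ^ 2)); [nra|]. destruct (Rlt_dec (- k ^ 2) 0); [|nra].
  rewrite Ropp_involutive, sqrt_pow2 by lra.
  assert (exp (- (k * l)) < exp (k * l)) by (apply exp_increasing; nra).
  pose proof (exp_pos (- (k * l))).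
  set (a := exp (k * l)) in *. set (b := exp (- (k * l))) in *.
  replace ((a + b) / 2 / ((a - b) / (2 * k))) with (k * ((a + b) / (a - b))) by (field; lra).
  assert (1 <= (a + b) / (a - b)).
  { apply Rmult_le_reg_r with (a - b); [lra|]. field_simplify; lra. }
  nra.
Qed.

Lemma small_angle_cot_large l M : 0 < l ->
  exists d, 0 < d <= 1 / 2 /\ forall k, 1 <= k * l -> Rabs M < k * (cos d / sin d).
Proof.
  intros Hl. pose proof (Rabs_pos M).
  set (X := 2 * l * (Rabs M + 1) + 2). assert (HX : 2 < X) by (unfold X; nra).
  exists (/ X). assert (Hd : 0 < / X <= 1 / 2).
  { split; [apply Rinv_0_lt_compat; lra|]. apply Rmult_le_reg_r with X; [lra|].
    field_simplify; lra. }
  split; auto. intros k Hk.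
  assert (Hk0 : 0 < k) by (destruct (Rle_dec k 0); nra).
  pose proof (cot_ge_inv (/ X) Hd) as Hcot. rewrite Rinv_mult, Rinv_inv in Hcot.
  apply Rlt_le_trans with (k * (/ 2 * X)); [|apply Rmult_le_compat_l; lra].
  apply Rmult_lt_reg_r with l; [lra|].
  assert (X <= k * l * X) by nra. unfold X in *. nra.
Qed.

Lemma kcot_pole l M : 0 < l ->
  exists lam, 0 <= lam /\ lam * l ^ 2 < PI ^ 2 /\ kcot lam l < M.
Proof.
  intros Hl. pose proof PI2_3_2. destruct (small_angle_cot_large l M Hl) as [d [Hd Hcot]].
  set (k := (PI - d) / l).
  assert (Hkl : k * l = PI - d) by (unfold k; field; lra).
  assert (Hk : 0 < k) by (apply Rdiv_lt_0_compat; lra).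
  exists (k ^ 2). split; [nra|]. split; [replace (k ^ 2 * l ^ 2) with ((k * l) ^ 2) by ring; nra|].
  unfold kcot. rewrite cosl_sq, sinl_sq, Hkl, Rtrigo_facts.cos_pi_minus, sin_PI_x by lra.
  assert (0 < sin d) by (apply sin_gt_0; lra).
  replace (- cos d / (sin d / k)) with (- (k * (cos d / sin d))) by (field; lra).
  pose proof (Hcot k ltac:(lra)). pose proof (RRle_abs (- M)). rewrite Rabs_Ropp in *. lra.
Qed.

Lemma ktan_pole l M : 0 < l ->
  exists lam, 0 <= lam /\ lam * l ^ 2 < (PI / 2) ^ 2 /\ M < ktan lam l.
Proof.
  intros Hl. pose proof PI2_3_2. destruct (small_angle_cot_large l M Hl) as [d [Hd Hcot]].
  set (k := (PI / 2 - d) / l).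
  assert (Hkl : k * l = PI / 2 - d) by (unfold k; field; lra).
  assert (Hk : 0 < k) by (apply Rdiv_lt_0_compat; lra).
  exists (k ^ 2). split; [nra|]. split; [replace (k ^ 2 * l ^ 2) with ((k * l) ^ 2) by ring; nra|].
  unfold ktan. rewrite cosl_sq, sinl_sq, Hkl, sin_shift, cos_shift by lra.
  assert (0 < sin d) by (apply sin_gt_0; lra).
  replace (k ^ 2 * (cos d / k) / sin d) with (k * (cos d / sin d)) by (field; lra).
  pose proof (Hcot k ltac:(lra)). pose proof (RRle_abs M). lra.
Qed.

Lemma cosl_sub_1_le lam x : 0 <= x -> Rabs lam * x ^ 2 <= 1 / 4 ->
  Rabs (cosl lam x - 1) <= 2 * Rabs lam * x ^ 2.
Proof.
  intros Hx Hlam.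
  destruct (cosl_sinl_cases lam) as [[k [Hk [-> E]]]|[[k [Hk [-> E]]]|[-> E]]];
    rewrite (proj1 (E x)).
  - rewrite (Rabs_right (k ^ 2)) in * by nra.
    assert (0 <= k * x) by nra.
    assert ((k * x) ^ 2 <= 1 / 4) by (replace ((k * x) ^ 2) with (k ^ 2 * x ^ 2) by ring; lra).
    assert (k * x <= 1 / 2) by nra.
    destruct (one_sub_cos_le (k * x)) as [C1 C2]; [lra|].
    rewrite Rabs_left1 by lra. nra.
  - rewrite (Rabs_left (- k ^ 2)) in * by nra.
    assert (0 <= k * x) by nra.
    assert ((k * x) ^ 2 <= 1 / 4) by (replace ((k * x) ^ 2) with (- - k ^ 2 * x ^ 2) by ring; lra).
    assert (k * x <= 1 / 2) by nra.
    destruct (cosh_sub_1_le (k * x)) as [C1 C2]; [lra|].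
    rewrite Rabs_right by lra. nra.
  - rewrite Rminus_diag, Rabs_R0. lra.
Qed.

Lemma sinl_sub_id_le lam x : 0 <= x -> Rabs lam * x ^ 2 <= 1 / 4 ->
  Rabs (sinl lam x - x) <= 2 * Rabs lam * x ^ 3.
Proof.
  intros Hx Hlam. pose proof (Rabs_pos lam).
  replace (sinl lam x - x) with ((sinl lam x - x) - (sinl lam 0 - 0)) by (rewrite sinl_0; ring).
  replace (2 * Rabs lam * x ^ 3) with (2 * Rabs lam * x ^ 2 * (x - 0)) by ring.
  apply (Rabs_sub_le_of_is_derive (fun t => sinl lam t - t) (fun t => cosl lam t - 1)); [lra| |].
  - intros t _. auto_derive; [auto using ex_derive_sinl | rewrite Derive_sinl; ring].
  - intros t Ht. assert (t ^ 2 <= x ^ 2) by nra.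
    apply Rle_trans with (2 * Rabs lam * t ^ 2); [apply cosl_sub_1_le; nra | nra].
Qed.

Lemma lipschitz_at_lam0 (g : R -> R) x K :
  (forall lam, Rabs lam * x ^ 2 <= 1 / 4 -> Rabs (g lam - g 0) <= K * Rabs lam) ->
  continuity_pt g 0.
Proof.
  intros Hg. apply (continuity_pt_of_lipschitz_at g 0 (/ (4 * (x ^ 2 + 1))) K).
  - apply Rinv_0_lt_compat. nra.
  - intros y Hy. rewrite Rminus_0_r in *. apply Hg.
    pose proof (Rabs_pos y).
    apply Rmult_lt_compat_r with (r := 4 * (x ^ 2 + 1)) in Hy; [|nra].
    rewrite Rinv_l in Hy by nra. nra.
Qed.

Lemma cosl_continuous_lam x lam0 : 0 <= x -> continuity_pt (fun lam => cosl lam x) lam0.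
Proof.
  intros Hx. destruct (Rtotal_order lam0 0) as [Hneg|[->|Hpos]].
  - apply (continuity_pt_locally_ext
      (fun lam => (exp (sqrt (- lam) * x) + exp (- (sqrt (- lam) * x))) / 2) _ (- lam0)); [lra| |].
    + intros y Hy. unfold Rdist in Hy. apply Rabs_def2 in Hy. unfold cosl.
      destruct (Rlt_dec 0 y); [lra|]. destruct (Rlt_dec y 0); [auto|lra].
    + apply continuity_pt_of_ex_derive. auto_derive. lra.
  - apply (lipschitz_at_lam0 _ x (2 * x ^ 2)). intros lam Hlam.
    rewrite cosl_lam0. replace (2 * x ^ 2 * Rabs lam) with (2 * Rabs lam * x ^ 2) by ring.
    apply cosl_sub_1_le; auto.
  - apply (continuity_pt_locally_ext (fun lam => cos (sqrt lam * x)) _ lam0); [lra| |].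
    + intros y Hy. unfold Rdist in Hy. apply Rabs_def2 in Hy. unfold cosl.
      destruct (Rlt_dec 0 y); [auto|lra].
    + apply continuity_pt_of_ex_derive. auto_derive. lra.
Qed.

Lemma sinl_continuous_lam x lam0 : 0 <= x -> continuity_pt (fun lam => sinl lam x) lam0.
Proof.
  intros Hx. destruct (Rtotal_order lam0 0) as [Hneg|[->|Hpos]].
  - apply (continuity_pt_locally_ext
      (fun lam => (exp (sqrt (- lam) * x) - exp (- (sqrt (- lam) * x))) / (2 * sqrt (- lam)))
      _ (- lam0)); [lra| |].
    + intros y Hy. unfold Rdist in Hy. apply Rabs_def2 in Hy. unfold sinl.
      destruct (Rlt_dec 0 y); [lra|]. destruct (Rlt_dec y 0); [auto|lra].
    + apply continuity_pt_of_ex_derive. auto_derive.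
      assert (0 < sqrt (- lam0)) by (apply sqrt_lt_R0; lra). repeat split; lra.
  - apply (lipschitz_at_lam0 _ x (2 * x ^ 3)). intros lam Hlam.
    rewrite sinl_lam0. replace (2 * x ^ 3 * Rabs lam) with (2 * Rabs lam * x ^ 3) by ring.
    apply sinl_sub_id_le; auto.
  - apply (continuity_pt_locally_ext (fun lam => sin (sqrt lam * x) / sqrt lam) _ lam0); [lra| |].
    + intros y Hy. unfold Rdist in Hy. apply Rabs_def2 in Hy. unfold sinl.
      destruct (Rlt_dec 0 y); [auto|lra].
    + apply continuity_pt_of_ex_derive. auto_derive.
      assert (0 < sqrt lam0) by (apply sqrt_lt_R0; lra). repeat split; lra.
Qed.

Lemma kcot_continuous lam l : 0 < l -> lam * l ^ 2 < PI ^ 2 ->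
  continuity_pt (fun mu => kcot mu l) lam.
Proof.
  intros Hl Hpole. unfold kcot.
  apply continuity_pt_div; [apply cosl_continuous_lam | apply sinl_continuous_lam | ]; try lra.
  apply Rgt_not_eq, sinl_pos; auto.
Qed.

Lemma ktan_continuous lam l : 0 < l -> lam * l ^ 2 < (PI / 2) ^ 2 ->
  continuity_pt (fun mu => ktan mu l) lam.
Proof.
  intros Hl Hpole. unfold ktan.
  apply continuity_pt_div;
    [apply continuity_pt_mult; [apply continuity_pt_id | apply sinl_continuous_lam]
    | apply cosl_continuous_lam | ]; try lra.
  apply Rgt_not_eq, cosl_pos; lra.
Qed.

(** * Stars of Dirichlet edges *)

Definition kcot_sum (ls : list R) (lam : R) : R := fold_right (fun l s => kcot lam l + s) 0 ls.

Definition inv_sum (ls : list R) : R := fold_right (fun l s => / l + s) 0 ls.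

Definition below_pole (ls : list R) (lam : R) : Prop :=
  List.Forall (fun l => lam * l ^ 2 < PI ^ 2) ls.

Lemma kcot_sum_cons l ls lam : kcot_sum (l :: ls) lam = kcot lam l + kcot_sum ls lam.
Proof. reflexivity. Qed.

Lemma inv_sum_cons l ls : inv_sum (l :: ls) = / l + inv_sum ls.
Proof. reflexivity. Qed.

Lemma below_pole_le ls lam mu : List.Forall (fun l => 0 < l) ls -> lam <= mu ->
  below_pole ls mu -> below_pole ls lam.
Proof.
  intros Hpos Hle Hmu. pose proof PI_RGT_0. unfold below_pole in *.
  rewrite Forall_forall in *. intros l Hl.
  apply (mul_sq_lt_of_le lam mu l l); auto; [nra | specialize (Hpos l Hl); lra].
Qed.

Lemma below_pole_0 ls : below_pole ls 0.
Proof.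
  pose proof PI_RGT_0. unfold below_pole. rewrite Forall_forall. intros l _. nra.
Qed.

Lemma kcot_sum_le_decr ls lam mu : List.Forall (fun l => 0 < l) ls -> lam <= mu ->
  below_pole ls mu -> kcot_sum ls mu <= kcot_sum ls lam.
Proof.
  intros Hpos Hle Hmu. induction ls as [|l ls IH]; simpl; [lra|].
  apply Forall_cons_iff in Hpos as [Hl Hpos]. apply Forall_cons_iff in Hmu as [Hml Hmu].
  pose proof (IH Hpos Hmu).
  destruct (Req_dec lam mu) as [->|Hne]; [lra|].
  pose proof (kcot_decreasing lam mu l Hl ltac:(lra) Hml). lra.
Qed.

Lemma kcot_sum_decreasing l ls lam mu : List.Forall (fun l => 0 < l) (l :: ls) -> lam < mu ->
  below_pole (l :: ls) mu -> kcot_sum (l :: ls) mu < kcot_sum (l :: ls) lam.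
Proof.
  intros Hpos Hlt Hmu. simpl.
  pose proof (kcot_sum_le_decr ls lam mu (Forall_inv_tail Hpos) (Rlt_le _ _ Hlt)
    (Forall_inv_tail Hmu)).
  pose proof (kcot_decreasing lam mu l (Forall_inv Hpos) Hlt (Forall_inv Hmu)). lra.
Qed.

Lemma kcot_sum_continuous ls lam : List.Forall (fun l => 0 < l) ls -> below_pole ls lam ->
  continuity_pt (kcot_sum ls) lam.
Proof.
  intros Hpos Hlam. induction ls as [|l ls IH]; simpl.
  - apply continuity_pt_const. intros ? ?; reflexivity.
  - apply Forall_cons_iff in Hpos as [Hl Hpos]. apply Forall_cons_iff in Hlam as [Hll Hlam].
    apply (continuity_pt_plus (fun mu => kcot mu l) (kcot_sum ls)); auto using kcot_continuous.
Qed.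

Lemma kcot_sum_lam0 ls : kcot_sum ls 0 = inv_sum ls.
Proof.
  induction ls as [|l ls IH]; simpl; [reflexivity|].
  rewrite IH. unfold kcot. rewrite cosl_lam0, sinl_lam0. unfold Rdiv. ring.
Qed.

Lemma kcot_sum_le_inv_sum ls lam : List.Forall (fun l => 0 < l) ls -> 0 <= lam ->
  below_pole ls lam -> kcot_sum ls lam <= inv_sum ls.
Proof.
  intros Hpos H0 Hlam. rewrite <- kcot_sum_lam0. apply kcot_sum_le_decr; auto.
Qed.

Lemma kcot_sum_le_at ls L lam : List.Forall (fun l => 0 < l) ls -> In L ls -> 0 <= lam ->
  below_pole ls lam -> kcot_sum ls lam <= kcot lam L + inv_sum ls.
Proof.
  intros Hpos HL H0 Hlam. induction ls as [|l ls IH]; [destruct HL|].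
  rewrite kcot_sum_cons, inv_sum_cons.
  apply Forall_cons_iff in Hpos as [Hl Hpos]. apply Forall_cons_iff in Hlam as [Hll Hlam].
  pose proof (Rinv_0_lt_compat l Hl).
  destruct HL as [<-|HL].
  - pose proof (kcot_sum_le_inv_sum ls lam Hpos H0 Hlam). lra.
  - pose proof (kcot_le_inv lam l Hl H0 Hll). pose proof (IH Hpos HL Hlam). lra.
Qed.

Lemma kcot_sum_opp_sq_ge l ls k : List.Forall (fun l => 0 < l) (l :: ls) -> 0 < k ->
  k <= kcot_sum (l :: ls) (- k ^ 2).
Proof.
  intros Hpos Hk. rewrite kcot_sum_cons.
  assert (Hnonneg : forall ls', List.Forall (fun l => 0 < l) ls' -> 0 <= kcot_sum ls' (- k ^ 2)).
  { induction ls' as [|l' ls' IH]; intros H; [simpl; lra|].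
    rewrite kcot_sum_cons. apply Forall_cons_iff in H as [Hl' H].
    pose proof (kcot_opp_sq_ge k l' Hk Hl'). pose proof (IH H). lra. }
  pose proof (kcot_opp_sq_ge k l Hk (Forall_inv Hpos)).
  pose proof (Hnonneg ls (Forall_inv_tail Hpos)). lra.
Qed.

Lemma kcot_sum_root l ls y : List.Forall (fun l => 0 < l) (l :: ls) ->
  exists lam, below_pole (l :: ls) lam /\ kcot_sum (l :: ls) lam = y.
Proof.
  intros Hpos. set (ls' := l :: ls) in *. pose proof PI_RGT_0.
  set (L := RList.MaxRlist ls').
  assert (HL : In L ls') by (apply RList.MaxRlist_P2; exists l; left; reflexivity).
  assert (HL0 : 0 < L) by (rewrite Forall_forall in Hpos; auto).
  destruct (kcot_pole L (y - inv_sum ls') HL0) as [b [Hb0 [HbL Hb]]].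
  assert (Hbp : below_pole ls' b).
  { unfold below_pole. rewrite Forall_forall in *. intros l' Hl'.
    pose proof (Hpos l' Hl'). assert (l' <= L) by exact (RList.MaxRlist_P1 ls' l' Hl').
    apply (mul_sq_lt_of_le b b l' L); [nra | lra | lra | exact HbL]. }
  pose proof (kcot_sum_le_at ls' L b Hpos HL Hb0 Hbp).
  set (k := Rabs y + 1). assert (Hk : 0 < k) by (pose proof (Rabs_pos y); unfold k; lra).
  assert (k <= kcot_sum ls' (- k ^ 2)) by exact (kcot_sum_opp_sq_ge l ls k Hpos Hk).
  pose proof (RRle_abs y).
  assert (Hab : - k ^ 2 < b) by nra.
  destruct (Ranalysis5.IVT_interv (fun lam => y - kcot_sum ls' lam) (- k ^ 2) b)
    as [lam [Hlam Hroot]]; [| lra | unfold k in *; lra | lra |].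
  - intros lam Hlam.
    apply continuity_pt_minus; [apply continuity_pt_const; intros ? ?; reflexivity|].
    apply kcot_sum_continuous; auto. apply (below_pole_le ls' lam b); auto. lra.
  - exists lam. split; [apply (below_pole_le ls' lam b); auto; lra | lra].
Qed.

Lemma lt_of_kcot_sum_lt ls lam mu : List.Forall (fun l => 0 < l) ls -> below_pole ls lam ->
  kcot_sum ls mu < kcot_sum ls lam -> lam < mu.
Proof.
  intros Hpos Hlam Hlt. destruct (Rlt_le_dec lam mu) as [|Hle]; auto.
  pose proof (kcot_sum_le_decr ls mu lam Hpos Hle Hlam). lra.
Qed.

Lemma is_lambda1_unique E a b : is_lambda1 E a -> is_lambda1 E b -> a = b.
Proof. intros [Ea Ha] [Eb Hb]. apply Rle_antisym; auto. Qed.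

Lemma is_lambda1_ext (E E' : R -> Prop) m : (forall mu, E mu <-> E' mu) ->
  is_lambda1 E m -> is_lambda1 E' m.
Proof. intros HE [Em Hm]. split; [apply HE, Em|]. intros mu Emu. apply Hm, HE, Emu. Qed.

Lemma lambda1_lt_of_is_lambda1 EB EA b a : is_lambda1 EB b -> is_lambda1 EA a -> b < a ->
  lambda1_lt EB EA.
Proof.
  intros Hb Ha Hlt. split; [eauto|]. split; [eauto|].
  intros a' b' Ha' Hb'.
  rewrite (is_lambda1_unique EA a' a), (is_lambda1_unique EB b' b); auto.
Qed.

(** * The graphs Gamma_1 and Gamma_2 *)

Lemma eig1_swap cA cB l1 l2 l3 l4 lam :
  eig1 cA cB l1 l2 l3 l4 lam -> eig1 cB cA l1 l2 l3 l4 lam.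
Proof.
  intros [f [df [ddf [He [HA [HB [i [x [Hi [Hx Hfx]]]]]]]]]].
  set (L := fun i : nat => match i with 1 => l1 | 2 => l2 | 3 => l3 | _ => l4 end%nat) in *.
  exists (fun i x => f i (L i - x)), (fun i x => - df i (L i - x)), (fun i x => ddf i (L i - x)).
  split; [|split; [|split]].
  - intros j Hj. apply edge_eq_reflect, He, Hj.
  - simpl. rewrite !Rminus_0_r. exact HB.
  - simpl. rewrite !Rminus_diag.
    replace (- - df 1%nat 0 - - df 2%nat 0 - - df 3%nat 0 - - df 4%nat 0)
      with (df 1%nat 0 + df 2%nat 0 + df 3%nat 0 + df 4%nat 0) by ring.
    exact HA.
  - change (0 <= x <= L i) in Hx. exists i, (L i - x). split; [exact Hi|].
    split; [change (0 <= L i - x <= L i); lra|].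
    replace (L i - (L i - x)) with x by ring. exact Hfx.
Qed.

Section Graphs.

Variables l0 l1 l2 l3 l4 : R.
Hypotheses (Hl0 : 0 < l0) (Hl1 : 0 < l1) (Hl2 : 0 < l2) (Hl3 : 0 < l3) (Hl4 : 0 < l4).

Let star := [l1; l2; l3; l4].

Lemma star_pos : List.Forall (fun l => 0 < l) star.
Proof. repeat constructor; assumption. Qed.

Lemma eig1_dirA_kcot_sum g lam : below_pole star lam ->
  eig1 VDir (VDelta g) l1 l2 l3 l4 lam -> kcot_sum star lam = - g.
Proof.
  intros Hpole [f [df [ddf [He [HA [HB Hnz]]]]]].
  unfold below_pole, star in Hpole. repeat rewrite Forall_cons_iff in Hpole.
  destruct Hpole as (P1 & P2 & P3 & P4 & _).
  simpl in HA. repeat rewrite Forall_cons_iff in HA. destruct HA as (A1 & A2 & A3 & A4 & _).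
  destruct (edge_dirichlet_at_0 _ _ _ _ _ Hl1 P1 (He 1%nat ltac:(lia)) A1) as [D1 Z1].
  destruct (edge_dirichlet_at_0 _ _ _ _ _ Hl2 P2 (He 2%nat ltac:(lia)) A2) as [D2 Z2].
  destruct (edge_dirichlet_at_0 _ _ _ _ _ Hl3 P3 (He 3%nat ltac:(lia)) A3) as [D3 Z3].
  destruct (edge_dirichlet_at_0 _ _ _ _ _ Hl4 P4 (He 4%nat ltac:(lia)) A4) as [D4 Z4].
  destruct HB as [v [HB Hsum]]. repeat rewrite Forall_cons_iff in HB.
  destruct HB as (B1 & B2 & B3 & B4 & _).
  rewrite D1, D2, D3, D4, B1, B2, B3, B4 in Hsum.
  destruct (Req_dec v 0) as [->|Hv].
  - exfalso. destruct Hnz as [i [x [Hi [Hx Hfx]]]]. apply Hfx.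
    destruct i as [|[|[|[|[|i]]]]]; try lia; [apply Z1 | apply Z2 | apply Z3 | apply Z4]; auto.
  - unfold star. simpl. apply (Rmult_eq_reg_l v); [|exact Hv]. lra.
Qed.

Lemma eig1_dirA_of_kcot_sum g lam : below_pole star lam -> kcot_sum star lam = - g ->
  eig1 VDir (VDelta g) l1 l2 l3 l4 lam.
Proof.
  intros Hpole Hsum.
  unfold below_pole, star in Hpole. repeat rewrite Forall_cons_iff in Hpole.
  destruct Hpole as (P1 & P2 & P3 & P4 & _).
  pose proof (sinl_pos _ _ Hl1 P1). pose proof (sinl_pos _ _ Hl2 P2).
  pose proof (sinl_pos _ _ Hl3 P3). pose proof (sinl_pos _ _ Hl4 P4).
  set (L := fun i : nat => match i with 1 => l1 | 2 => l2 | 3 => l3 | _ => l4 end%nat).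
  exists (fun i x => / sinl lam (L i) * sinl lam x), (fun i x => / sinl lam (L i) * cosl lam x),
    (fun i x => - lam * (/ sinl lam (L i) * sinl lam x)).
  split; [|split; [|split]].
  - intros i _. apply edge_eq_sinl.
  - simpl. rewrite !sinl_0, !Rmult_0_r. repeat constructor.
  - simpl. exists 1. split.
    + repeat constructor; field; lra.
    + unfold star, kcot_sum, kcot in Hsum. simpl in Hsum.
      rewrite Rmult_1_r, <- (Ropp_involutive g), <- Hsum. field. lra.
  - exists 1%nat, l1. split; [lia|]. split; [simpl; lra|]. simpl.
    rewrite Rinv_l; lra.
Qed.

Lemma eig1_dirA_lambda1 g lam : below_pole star lam -> kcot_sum star lam = - g ->
  is_lambda1 (eig1 VDir (VDelta g) l1 l2 l3 l4) lam.
Proof.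
  intros Hpole Hsum. split; [apply eig1_dirA_of_kcot_sum; auto|].
  intros mu Emu. destruct (Rle_lt_dec lam mu) as [|Hlt]; auto. exfalso.
  assert (Hmu : below_pole star mu) by (apply (below_pole_le _ mu lam star_pos); auto; lra).
  pose proof (eig1_dirA_kcot_sum g mu Hmu Emu).
  pose proof (kcot_sum_decreasing l1 [l2; l3; l4] mu lam star_pos Hlt Hpole). unfold star in *. lra.
Qed.

Lemma eig1_dirB_lambda1 g lam : below_pole star lam -> kcot_sum star lam = - g ->
  is_lambda1 (eig1 (VDelta g) VDir l1 l2 l3 l4) lam.
Proof.
  intros Hpole Hsum. apply (is_lambda1_ext (eig1 VDir (VDelta g) l1 l2 l3 l4)).
  - intros mu. split; apply eig1_swap.
  - apply eig1_dirA_lambda1; auto.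
Qed.

Lemma eig2_dirB_kcot_sum lam : below_pole star lam -> lam * l0 ^ 2 < (PI / 2) ^ 2 ->
  eig2 (VDelta 0) VDir l0 l1 l2 l3 l4 lam -> kcot_sum star lam = ktan lam l0.
Proof.
  intros Hpole Hpole0 [f [df [ddf [He [HA [HB [HC Hnz]]]]]]].
  unfold below_pole, star in Hpole. repeat rewrite Forall_cons_iff in Hpole.
  destruct Hpole as (P1 & P2 & P3 & P4 & _).
  simpl in HC. destruct HC as [w [_ C0]]. rewrite Rmult_0_l in C0.
  destruct (edge_neumann_at_0 _ _ _ _ _ Hl0 Hpole0 (He 0%nat ltac:(lia)) C0) as [D0 Z0].
  simpl in HB. repeat rewrite Forall_cons_iff in HB. destruct HB as (B1 & B2 & B3 & B4 & _).
  destruct (edge_dirichlet_at_end _ _ _ _ _ Hl1 P1 (He 1%nat ltac:(lia)) B1) as [D1 Z1].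
  destruct (edge_dirichlet_at_end _ _ _ _ _ Hl2 P2 (He 2%nat ltac:(lia)) B2) as [D2 Z2].
  destruct (edge_dirichlet_at_end _ _ _ _ _ Hl3 P3 (He 3%nat ltac:(lia)) B3) as [D3 Z3].
  destruct (edge_dirichlet_at_end _ _ _ _ _ Hl4 P4 (He 4%nat ltac:(lia)) B4) as [D4 Z4].
  destruct HA as [v [HA Hsum]]. repeat rewrite Forall_cons_iff in HA.
  destruct HA as (A0 & A1 & A2 & A3 & A4 & _).
  rewrite D0, D1, D2, D3, D4, A0, A1, A2, A3, A4, Rmult_0_l in Hsum.
  destruct (Req_dec v 0) as [->|Hv].
  - exfalso. destruct Hnz as [i [x [Hi [Hx Hfx]]]]. apply Hfx.
    destruct i as [|[|[|[|[|i]]]]]; try lia;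
      [apply Z0 | apply Z1 | apply Z2 | apply Z3 | apply Z4]; auto.
  - unfold star. simpl. apply (Rmult_eq_reg_l v); [|exact Hv]. lra.
Qed.

Lemma eig2_dirB_of_kcot_sum lam : below_pole star lam -> lam * l0 ^ 2 < (PI / 2) ^ 2 ->
  kcot_sum star lam = ktan lam l0 -> eig2 (VDelta 0) VDir l0 l1 l2 l3 l4 lam.
Proof.
  intros Hpole Hpole0 Hsum.
  unfold below_pole, star in Hpole. repeat rewrite Forall_cons_iff in Hpole.
  destruct Hpole as (P1 & P2 & P3 & P4 & _).
  pose proof (sinl_pos _ _ Hl1 P1). pose proof (sinl_pos _ _ Hl2 P2).
  pose proof (sinl_pos _ _ Hl3 P3). pose proof (sinl_pos _ _ Hl4 P4).
  pose proof (cosl_pos _ _ (Rlt_le _ _ Hl0) Hpole0).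
  set (L := fun i : nat => match i with 0 => l0 | 1 => l1 | 2 => l2 | 3 => l3 | _ => l4 end%nat).
  set (c := fun i : nat => match i with 0 => / cosl lam l0 | _ => / sinl lam (L i) end%nat).
  exists (fun i => match i with
           | 0%nat => fun x => c 0%nat * cosl lam x
           | _ => fun x => c i * sinl lam (L i - x) end),
    (fun i => match i with
           | 0%nat => fun x => - lam * (c 0%nat * sinl lam x)
           | _ => fun x => - (c i * cosl lam (L i - x)) end),
    (fun i => match i with
           | 0%nat => fun x => - lam * (c 0%nat * cosl lam x)
           | _ => fun x => - lam * (c i * sinl lam (L i - x)) end).
  split; [|split; [|split; [|split]]].
  - intros [|i] _; [apply edge_eq_cosl|].
    exact (edge_eq_reflect (L (S i)) lam _ _ _ (edge_eq_sinl _ lam (c (S i)))).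
  - simpl. exists 1. split.
    + rewrite !Rminus_0_r. repeat constructor; field; lra.
    + rewrite !Rminus_0_r.
      transitivity (ktan lam l0 - kcot_sum star lam); [|rewrite Hsum; ring].
      unfold star, kcot_sum, kcot, ktan. simpl. field. repeat split; lra.
  - simpl. rewrite !Rminus_diag, !sinl_0, !Rmult_0_r. repeat constructor.
  - simpl. exists (/ cosl lam l0 * cosl lam 0). split; [repeat constructor|].
    rewrite sinl_0. ring.
  - exists 0%nat, l0. split; [lia|]. split; [simpl; lra|]. simpl. rewrite Rinv_l; lra.
Qed.

Lemma eig2_dirB_lambda1 lam : below_pole star lam -> lam * l0 ^ 2 < (PI / 2) ^ 2 ->
  kcot_sum star lam = ktan lam l0 -> is_lambda1 (eig2 (VDelta 0) VDir l0 l1 l2 l3 l4) lam.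
Proof.
  intros Hpole Hpole0 Hsum. split; [apply eig2_dirB_of_kcot_sum; auto|].
  intros mu Emu. destruct (Rle_lt_dec lam mu) as [|Hlt]; auto. exfalso.
  assert (Hmu : below_pole star mu) by (apply (below_pole_le _ mu lam star_pos); auto; lra).
  assert (Hmu0 : mu * l0 ^ 2 < (PI / 2) ^ 2).
  { pose proof PI_RGT_0. apply (mul_sq_lt_of_le mu lam l0 l0); auto; nra. }
  pose proof (eig2_dirB_kcot_sum mu Hmu Hmu0 Emu).
  pose proof (kcot_sum_decreasing l1 [l2; l3; l4] mu lam star_pos Hlt Hpole).
  pose proof (ktan_increasing mu lam l0 Hl0 Hlt Hpole0). unfold star in *. lra.
Qed.

(* With Dirichlet at A, the pendant edge e_0 is a Neumann-Dirichlet interval, which carries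
   no eigenfunction below (PI / (2 l0))^2. *)
Lemma eig1_of_eig2_dirA lam : lam * l0 ^ 2 < (PI / 2) ^ 2 ->
  eig2 VDir (VDelta 0) l0 l1 l2 l3 l4 lam -> eig1 VDir (VDelta 0) l1 l2 l3 l4 lam.
Proof.
  intros Hpole0 [f [df [ddf [He [HA [HB [HC Hnz]]]]]]].
  simpl in HC. destruct HC as [w [_ C0]]. rewrite Rmult_0_l in C0.
  apply Forall_cons_iff in HA as [A0 HA].
  destruct (edge_neumann_at_0 _ _ _ _ _ Hl0 Hpole0 (He 0%nat ltac:(lia)) C0) as [_ Z0].
  exists f, df, ddf. split; [|split; [|split]]; auto.
  - intros [|[|[|[|[|i]]]]] Hi; try lia; apply He; lia.
  - destruct Hnz as [[|[|[|[|[|i]]]]] [x [Hi [Hx Hfx]]]]; try lia.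
    + exfalso. apply Hfx, Z0; auto.
    + exists 1%nat, x. split; [lia | auto].
    + exists 2%nat, x. split; [lia | auto].
    + exists 3%nat, x. split; [lia | auto].
    + exists 4%nat, x. split; [lia | auto].
Qed.

Lemma eig2_dirA_of_eig1 lam :
  eig1 VDir (VDelta 0) l1 l2 l3 l4 lam -> eig2 VDir (VDelta 0) l0 l1 l2 l3 l4 lam.
Proof.
  intros [f [df [ddf [He [HA [HB Hnz]]]]]].
  exists (fun i => match i with 0%nat => fun x => 0 * sinl lam x | _ => f i end),
    (fun i => match i with 0%nat => fun x => 0 * cosl lam x | _ => df i end),
    (fun i => match i with 0%nat => fun x => - lam * (0 * sinl lam x) | _ => ddf i end).
  split; [|split; [|split; [|split]]].
  - intros [|[|[|[|[|i]]]]] Hi; try lia; [apply edge_eq_sinl | apply He; lia ..].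
  - constructor; [ring | exact HA].
  - exact HB.
  - simpl. exists (0 * sinl lam 0). split; [repeat constructor | ring].
  - destruct Hnz as [[|[|[|[|[|i]]]]] [x [Hi [Hx Hfx]]]]; try lia.
    + exists 1%nat, x. split; [lia | auto].
    + exists 2%nat, x. split; [lia | auto].
    + exists 3%nat, x. split; [lia | auto].
    + exists 4%nat, x. split; [lia | auto].
Qed.

Lemma eig2_dirA_pendant : eig2 VDir (VDelta 0) l0 l1 l2 l3 l4 ((PI / (2 * l0)) ^ 2).
Proof.
  set (mu := (PI / (2 * l0)) ^ 2). pose proof PI_RGT_0.
  assert (Hk : 0 < PI / (2 * l0)) by (apply Rdiv_lt_0_compat; lra).
  exists (fun i => match i with 0%nat => fun x => 1 * cosl mu x | _ => fun x => 0 * sinl mu x end),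
    (fun i => match i with
           | 0%nat => fun x => - mu * (1 * sinl mu x) | _ => fun x => 0 * cosl mu x end),
    (fun i => match i with
           | 0%nat => fun x => - mu * (1 * cosl mu x) | _ => fun x => - mu * (0 * sinl mu x) end).
  split; [|split; [|split; [|split]]].
  - intros [|i] _; [apply edge_eq_cosl | apply edge_eq_sinl].
  - simpl. unfold mu. rewrite cosl_sq by exact Hk.
    replace (PI / (2 * l0) * l0) with (PI / 2) by (field; lra). rewrite cos_PI2.
    repeat constructor; ring.
  - simpl. exists 0. split; [repeat constructor; ring | ring].
  - simpl. exists (1 * cosl mu 0). split; [repeat constructor|]. rewrite sinl_0. ring.
  - exists 0%nat, 0. split; [lia|]. split; [simpl; lra|]. simpl. rewrite cosl_0. lra.
Qed.

Lemma eig2_dirA_lambda1 ms : below_pole star ms -> kcot_sum star ms = 0 ->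
  is_lambda1 (eig2 VDir (VDelta 0) l0 l1 l2 l3 l4) (Rmin ((PI / (2 * l0)) ^ 2) ms).
Proof.
  intros Hpole Hsum.
  destruct (eig1_dirA_lambda1 0 ms Hpole ltac:(rewrite Ropp_0; exact Hsum)) as [Ems Hmin].
  split; [apply Rmin_case; [apply eig2_dirA_pendant | apply eig2_dirA_of_eig1, Ems]|].
  intros mu Emu. destruct (Rle_lt_dec (Rmin ((PI / (2 * l0)) ^ 2) ms) mu) as [|Hlt]; auto.
  exfalso. apply Rmin_Rgt in Hlt as [Hlt0 Hlt]. pose proof PI_RGT_0.
  assert (Hmu0 : mu * l0 ^ 2 < (PI / 2) ^ 2).
  { replace ((PI / 2) ^ 2) with ((PI / (2 * l0)) ^ 2 * l0 ^ 2) by (field; lra).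
    apply Rmult_lt_compat_r; [nra | exact Hlt0]. }
  pose proof (Hmin mu (eig1_of_eig2_dirA mu Hmu0 Emu)). lra.
Qed.

Lemma inv_sum_star_pos : 0 < inv_sum star.
Proof.
  unfold star. simpl. pose proof (Rinv_0_lt_compat _ Hl1). pose proof (Rinv_0_lt_compat _ Hl2).
  pose proof (Rinv_0_lt_compat _ Hl3). pose proof (Rinv_0_lt_compat _ Hl4). lra.
Qed.

(* Take the point given by ktan_pole if it lies below ms, and ms itself otherwise. *)
Lemma exists_kcot_sum_lt_ktan ms : below_pole star ms -> kcot_sum star ms = 0 ->
  exists b, below_pole star b /\ b * l0 ^ 2 < (PI / 2) ^ 2 /\ kcot_sum star b < ktan b l0.
Proof.
  intros Hms Hsum.
  assert (Hms0 : 0 < ms).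
  { apply (lt_of_kcot_sum_lt star); auto using star_pos, below_pole_0.
    rewrite kcot_sum_lam0. pose proof inv_sum_star_pos. lra. }
  destruct (ktan_pole l0 (inv_sum star) Hl0) as [b [Hb0 [Hbl Hb]]].
  destruct (Rlt_le_dec b ms) as [Hlt|Hle].
  - assert (Hbp : below_pole star b) by (apply (below_pole_le _ b ms star_pos); auto; lra).
    pose proof (kcot_sum_le_inv_sum star b star_pos Hb0 Hbp).
    exists b. repeat split; auto. lra.
  - assert (Hmsl : ms * l0 ^ 2 < (PI / 2) ^ 2) by nra.
    pose proof (ktan_pos ms l0 Hl0 Hms0 Hmsl).
    exists ms. repeat split; auto. lra.
Qed.

Lemma kcot_sum_ktan_root ms : below_pole star ms -> kcot_sum star ms = 0 ->
  exists lam, 0 < lam /\ below_pole star lam /\ lam * l0 ^ 2 < (PI / 2) ^ 2 /\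
    kcot_sum star lam = ktan lam l0.
Proof.
  intros Hms Hsum. pose proof PI_RGT_0. pose proof inv_sum_star_pos.
  pose proof (ktan_nonpos 0 l0 Hl0 (Rle_refl 0)).
  destruct (exists_kcot_sum_lt_ktan ms Hms Hsum) as [b [Hbp [Hbl Hbs]]].
  assert (Hb0 : 0 < b).
  { destruct (Rle_lt_dec b 0) as [Hle|]; auto. exfalso.
    pose proof (ktan_nonpos b l0 Hl0 Hle).
    pose proof (kcot_sum_le_decr star b 0 star_pos Hle (below_pole_0 star)).
    rewrite kcot_sum_lam0 in *. lra. }
  assert (Hbelow : forall lam, lam <= b -> below_pole star lam /\ lam * l0 ^ 2 < (PI / 2) ^ 2).
  { intros lam Hlam. split; [apply (below_pole_le _ lam b star_pos); auto|].
    apply (mul_sq_lt_of_le lam b l0 l0); auto; nra. }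
  destruct (Ranalysis5.IVT_interv (fun lam => ktan lam l0 - kcot_sum star lam) 0 b)
    as [lam [Hlam Hroot]]; auto.
  - intros lam Hlam. destruct (Hbelow lam ltac:(lra)).
    apply continuity_pt_minus; [apply ktan_continuous | apply kcot_sum_continuous];
      auto using star_pos.
  - rewrite kcot_sum_lam0. lra.
  - lra.
  - destruct (Hbelow lam ltac:(lra)) as [Hp Hp0]. exists lam. repeat split; auto; [|lra].
    destruct (Req_dec lam 0) as [->|]; [|lra]. rewrite kcot_sum_lam0 in Hroot. lra.
Qed.

Lemma gamma1_lambda1_lt gA gB : gA < gB ->
  lambda1_lt (eig1 (VDelta gA) VDir l1 l2 l3 l4) (eig1 VDir (VDelta gB) l1 l2 l3 l4).
Proof.
  intros Hg.
  destruct (kcot_sum_root l1 [l2; l3; l4] (- gA) star_pos) as [la [Hla Hsa]].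
  destruct (kcot_sum_root l1 [l2; l3; l4] (- gB) star_pos) as [lb [Hlb Hsb]].
  apply (lambda1_lt_of_is_lambda1 _ _ la lb).
  - apply eig1_dirB_lambda1; auto.
  - apply eig1_dirA_lambda1; auto.
  - apply (lt_of_kcot_sum_lt star); auto using star_pos. unfold star. lra.
Qed.

Lemma gamma2_lambda1_lt :
  lambda1_lt (eig2 (VDelta 0) VDir l0 l1 l2 l3 l4) (eig2 VDir (VDelta 0) l0 l1 l2 l3 l4).
Proof.
  destruct (kcot_sum_root l1 [l2; l3; l4] 0 star_pos) as [ms [Hms Hsum]].
  destruct (kcot_sum_ktan_root ms Hms Hsum) as [lam [Hlam [Hpole [Hpole0 Heq]]]].
  apply (lambda1_lt_of_is_lambda1 _ _ lam (Rmin ((PI / (2 * l0)) ^ 2) ms)).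
  - apply eig2_dirB_lambda1; auto.
  - apply eig2_dirA_lambda1; auto.
  - apply Rmin_glb_lt.
    + replace ((PI / 2) ^ 2) with ((PI / (2 * l0)) ^ 2 * l0 ^ 2) in Hpole0 by (field; lra).
      apply Rmult_lt_reg_r with (l0 ^ 2); [nra | exact Hpole0].
    + apply (lt_of_kcot_sum_lt star); auto using star_pos.
      pose proof (ktan_pos lam l0 Hl0 Hlam Hpole0). unfold star in *. lra.
Qed.

End Graphs.

Theorem lemma4p1 :
  (forall l1 l2 l3 l4 gA gB : R,
     0 < l1 -> 0 < l2 -> 0 < l3 -> 0 < l4 -> gA < gB ->
     lambda1_lt (eig1 (VDelta gA) VDir l1 l2 l3 l4)
                (eig1 VDir (VDelta gB) l1 l2 l3 l4)) /\
  (forall l0 l1 l2 l3 l4 : R,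
     0 < l0 -> 0 < l1 -> 0 < l2 -> 0 < l3 -> 0 < l4 ->
     lambda1_lt (eig2 (VDelta 0) VDir l0 l1 l2 l3 l4)
                (eig2 VDir (VDelta 0) l0 l1 l2 l3 l4)).
Proof.
  split.
  - intros. apply gamma1_lambda1_lt; assumption.
  - intros. apply gamma2_lambda1_lt; assumption.
Qed.
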